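(* Fix $\varepsilon>0$, $\delta>0$ and a positive integer $t$. For a database $D$ (a finite multiset of points in $\mathbb{R}^d$), define $M(D)$ to be the largest $k\in\{0,1,\dots,t-1\}$ for which there exists a positive integer $g$ with $$\frac{V_{t-k-1,D}}{V_{t+k+g+1,D}}\cdot e^{-\varepsilon g/2}\le\delta,$$ where this inequality is understood to hold only when $V_{t-k-1,D}<\infty$ and $V_{t+k+g+1,D}>0$; if no such $k$ exists, $M(D)=-1$. Then: (1) $M$ has sensitivity 1: for all neighboring databases $D\sim D'$, $|M(D)-M(D')|\le 1$. (2) Assume that for every database $z$ under consideration the set $\{y:\tilde T_z(y)\ge t\}$ has positive Lebesgue measure (so that $A_t(z)$ below is well defined). Then for every database $z\in\mathrm{Unsafe}(\varepsilon,4e^{\varepsilon}\delta,t)$ we have $d_H(D,z)>M(D)$.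
   Context: Databases are finite multisets of points in $\mathbb{R}^d$; $D\sim D'$ (neighbors) means one is obtained from the other by adding or removing a single point. $d_H(D,z)$ is the minimum number of single-point additions/removals needed to transform $D$ into $z$. For $y\in\mathbb{R}^d$ and $j\in[d]$, $T_{D,j}(y)=\min\big(|\{x\in D: x_j\le y_j\}|,|\{x\in D: x_j\ge y_j\}|\big)$ (with multiplicity), and the approximate Tukey depth is $\tilde T_D(y)=\min_{j\in[d]}T_{D,j}(y)$. For an integer $p$, $V_{p,D}$ is the Lebesgue measure of $\{y:\tilde T_D(y)\ge p\}$ (so $V_{p,D}=+\infty$ for $p\le 0$). Two distributions $P,Q$ on $\mathbb{R}^d$ are $(\varepsilon,\delta)$-indistinguishable if for every measurable $W$, $P(W)\le e^{\varepsilon}Q(W)+\delta$ and $Q(W)\le e^{\varepsilon}P(W)+\delta$. For a database $z$, $A_t(z)$ is the restricted exponential mechanism: the distribution on $\mathbb{R}^d$ with density proportional to $\exp(\varepsilon\,\tilde T_z(y)/2)\cdot\mathbf{1}[\tilde T_z(y)\ge t]$. A database $z$ is $(\varepsilon,\delta,t)$-safe if $A_t(z)$ and $A_t(z')$ are $(\varepsilon,\delta)$-indistinguishable for every neighbor $z'\sim z$; $\mathrm{Unsafe}(\varepsilon,\delta,t)$ is the set of databases that are not $(\varepsilon,\delta,t)$-safe. *)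

From HB Require Import structures.
From mathcomp Require Import all_boot all_order all_algebra.
From mathcomp Require Import all_classical all_reals all_analysis.
Set Implicit Arguments. Unset Strict Implicit. Unset Printing Implicit Defensive.
Import Order.TTheory GRing.Theory Num.Theory.
Local Open Scope classical_set_scope.
Local Open Scope ring_scope.

Section Defs.
Variable R : realType.

Notation pt d := (d.-tuple (measurableTypeR R)).

(** Lebesgue measure on R^d, defined as the iterated product measure
    lambda_{n+1} = (lambda \x lambda_n) pushed forward by (x, v) |-> x :: v,
    with lambda_0 the Dirac mass at the empty tuple. *)
Fixpoint lebesgue_d (n : nat) : set (pt n) -> \bar R :=
  match n with
  | 0 => fun A => (\1_A [tuple] )%:E
  | n'.+1 => fun A =>
      @product_measure1 _ _ (measurableTypeR R) (pt n') R
        (@lebesgue_measure R) (@lebesgue_d n')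
        ((fun p : measurableTypeR R * pt n' => [tuple of p.1 :: p.2]) @^-1` A)
  end.

(** Databases: finite multisets of points, represented by sequences
    (considered up to permutation). *)
Definition database d := seq (pt d).

Definition neighbor d (D D' : database d) : Prop :=
  exists x, perm_eq D' (x :: D) \/ perm_eq D (x :: D').

Fixpoint chain d (k : nat) (D z : database d) : Prop :=
  match k with
  | 0 => perm_eq D z
  | k'.+1 => exists D1, neighbor D D1 /\ chain k' D1 z
  end.

Definition dH d (D z : database d) : nat :=
  match pselect (exists k, `[< chain k D z >]) with
  | left h => ex_minn h
  | right _ => 0%N
  end.

Definition Tj d (D : database d) (j : 'I_d) (y : pt d) : nat :=
  minn (count (fun x => tnth x j <= tnth y j) D)
       (count (fun x => tnth x j >= tnth y j) D).

(** approximate Tukey depth: minimum over j in [d]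
    (for d >= 1 the neutral element |D| is irrelevant, since Tj <= |D|). *)
Definition Ttilde d (D : database d) (y : pt d) : nat :=
  \big[minn/size D]_(j < d) Tj D j y.

Definition V d (p : int) (D : database d) : \bar R :=
  @lebesgue_d d [set y | p <= (Ttilde D y)%:Z].

Definition goodk d (eps delta : R) (t : nat) (D : database d) (k : nat) : Prop :=
  exists g : nat, (0 < g)%N /\
    let a := V (t%:Z - k%:Z - 1) D in
    let b := V (t%:Z + k%:Z + g%:Z + 1) D in
    [/\ (a < +oo)%E, (0 < b)%E &
        fine a / fine b * expR (- (eps * g%:R) / 2) <= delta].

Definition M d (eps delta : R) (t : nat) (D : database d) : int :=
  \big[Num.max/(-1)%R]_(k < t | `[< goodk eps delta t D k >]) (k%:Z).

(** unnormalized density of the restricted exponential mechanism A_t(z) *)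
Definition mech_density d (eps : R) (t : nat) (z : database d) (y : pt d) : \bar R :=
  (if (t <= Ttilde z y)%N then expR (eps * (Ttilde z y)%:R / 2) else 0)%:E.

Definition mech d (eps : R) (t : nat) (z : database d) (W : set (pt d)) : R :=
  fine (\int[@lebesgue_d d]_(y in W) mech_density eps t z y)%E /
  fine (\int[@lebesgue_d d]_(y in [set: pt d]) mech_density eps t z y)%E.

Definition indist d (eps delta : R) (P Q : set (pt d) -> R) : Prop :=
  forall W : set (pt d), measurable W ->
    P W <= expR eps * Q W + delta /\ Q W <= expR eps * P W + delta.

Definition safe d (eps delta : R) (t : nat) (z : database d) : Prop :=
  forall z', neighbor z z' -> indist eps delta (mech eps t z) (mech eps t z').

Definition Unsafe d (eps delta : R) (t : nat) : set (database d) :=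
  [set z | ~ safe eps delta t z].

End Defs.

Arguments lebesgue_d {R} n.

From HB Require Import structures.
From mathcomp Require Import all_boot all_order all_algebra.
From mathcomp Require Import all_classical all_reals all_analysis.
From mathcomp Require Import measurable_realfun lebesgue_integral.
From mathcomp Require Import zify ring lra.
Import Order.TTheory GRing.Theory Num.Theory.
Local Open Scope classical_set_scope.
Local Open Scope ring_scope.
Set Implicit Arguments. Unset Strict Implicit. Unset Printing Implicit Defensive.

(* Adding or removing one point moves every approximate Tukey depth by at most
   one, so V_{p,D'} lies between V_{p+1,D} and V_{p-1,D}; hence a witness g for
   k+1 at D is a witness for k at any neighbour D', which gives sensitivity 1.

   For the second claim let k = M(D), with witness g, and suppose
   h = d_H(D,z) <= k.  The depths of z and of any neighbour z' are within h+1
   of those of D.  Hence both mechanisms are supported in A = {T_z >= t-1},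
   whose volume is at most V_{t-k-1,D}, while both normalising constants are at
   least e^{eps (t+k-h+g)/2} V_{t+k+g+1,D}.  The defining inequality of k thus
   gives e^{eps t/2} vol(A) <= delta Z_z and <= delta Z_z'.  Integrating the
   pointwise bound  p_z <= e^{eps/2} p_z' + e^{eps t/2} 1_A  between the
   unnormalised densities turns this into (eps, 4 e^eps delta)-
   indistinguishability of A_t(z) and A_t(z'): z is safe. *)

Section LebesgueTuple.
Variable R : realType.
Local Notation pt n := (n.-tuple (measurableTypeR R)).

Section ConsMeasure.
Variables (n : nat) (m : {sigma_finite_measure set (pt n) -> \bar R}).

Definition cons_tuple (p : measurableTypeR R * pt n) : pt n.+1 :=
  [tuple of p.1 :: p.2].
Definition split_tuple (v : pt n.+1) : measurableTypeR R * pt n :=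
  (thead v, [tuple of behead v]).

Lemma measurable_cons_tuple : measurable_fun setT cons_tuple.
Proof. exact: measurable_cons. Qed.

Lemma measurable_split_tuple : measurable_fun setT split_tuple.
Proof.
apply: measurable_fun_pair; last exact: measurable_behead.
exact: measurable_tnth.
Qed.

Lemma cons_tupleK : cancel cons_tuple split_tuple.
Proof. by case=> x v; congr pair; exact: val_inj. Qed.

Definition cons_measure (A : set (pt n.+1)) : \bar R :=
  (@lebesgue_measure R \x m)%E (cons_tuple @^-1` A).

Let cons_measure0 : cons_measure set0 = 0%E.
Proof. by rewrite /cons_measure preimage_set0 measure0. Qed.

Let cons_measure_ge0 A : (0 <= cons_measure A)%E.
Proof. exact: measure_ge0. Qed.

Let cons_measure_semi_sigma_additive : semi_sigma_additive cons_measure.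
Proof.
move=> F mF tF mUF; rewrite /cons_measure preimage_bigcup.
apply: measure_semi_sigma_additive.
- by move=> k; rewrite -[X in measurable X]setTI; exact: measurable_cons_tuple.
- apply/trivIsetP => /= i j _ _ ij; rewrite -preimage_setI.
  by move/trivIsetP : tF => /(_ _ _ _ _ ij) ->//; rewrite preimage_set0.
- by rewrite -preimage_bigcup -[X in measurable X]setTI;
    exact: measurable_cons_tuple.
Qed.

HB.instance Definition _ := isMeasure.Build _ _ _ cons_measure
  cons_measure0 cons_measure_ge0 cons_measure_semi_sigma_additive.

Let product_sigma_finite : sigma_finite setT (@lebesgue_measure R \x m)%E.
Proof.
have /sigma_finiteP[F [TF ndF Foo]] := sigma_finiteT (@lebesgue_measure R).
have /sigma_finiteP[G [TG ndG Goo]] := sigma_finiteT m.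
exists (fun k => F k `*` G k).
  rewrite -setXTT TF TG predeqE => -[x y]; split.
    move=> [/= [i _ Fix] [k _ Gky]]; exists (maxn i k) => //; split.
    - by move: x Fix; exact/subsetPset/ndF/leq_maxl.
    - by move: y Gky; exact/subsetPset/ndG/leq_maxr.
  by move=> [i _ []/= ? ?]; split; exists i.
move=> k; have [? ?] := Foo k; have [? ?] := Goo k.
split; first exact: measurableX.
by rewrite product_measure1E// lte_mul_pinfty// ge0_fin_numE.
Qed.

Let cons_measure_sigma_finite : sigma_finite setT cons_measure.
Proof.
have [F FT Fm] := product_sigma_finite.
exists (fun i => split_tuple @^-1` F i).
  apply/seteqP; split => // v _.
  have : [set: _] (split_tuple v) by [].
  by rewrite FT => -[i _ Fi]; exists i.
move=> i; split.
  rewrite -[X in measurable X]setTI; apply: measurable_split_tuple => //.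
  by case: (Fm i).
rewrite /cons_measure.
have -> : cons_tuple @^-1` (split_tuple @^-1` F i) = F i.
  by apply/funext => p; rewrite /preimage /= cons_tupleK.
by case: (Fm i).
Qed.

HB.instance Definition _ :=
  Measure_isSigmaFinite.Build _ _ _ cons_measure cons_measure_sigma_finite.

End ConsMeasure.

Fixpoint lebesgue_tuple (n : nat) : {sigma_finite_measure set (pt n) -> \bar R} :=
  match n with
  | 0 => [the {sigma_finite_measure set (pt 0) -> \bar R} of
          @dirac _ (pt 0) [tuple] R]
  | n'.+1 => [the {sigma_finite_measure set (pt n'.+1) -> \bar R} of
          cons_measure (lebesgue_tuple n')]
  end.

Lemma lebesgue_dE n : lebesgue_d n = lebesgue_tuple n.
Proof. by elim: n => [|n IH]; apply/funext => A //=; rewrite IH. Qed.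

End LebesgueTuple.

Section DepthMeasurability.
Variables (R : realType) (d : nat).
Local Notation pt := (d.-tuple (measurableTypeR R)).
Implicit Types (D : database R d) (y : pt).

Lemma measurable_fun_count D (P : pt -> pt -> bool) :
  (forall x, measurable [set y | P x y]) ->
  measurable_fun setT (fun y => ((count (P^~ y) D)%:R : R)).
Proof.
move=> mP.
have -> : (fun y => ((count (P^~ y) D)%:R : R)) =
    (fun y => \sum_(x <- D) \1_[set y | P x y] y).
  apply/funext => y; elim: D => [|x D IH]; first by rewrite big_nil.
  rewrite big_cons /= natrD IH indicE; congr (_ + _).
  by case h: (P x y); [rewrite mem_set|rewrite memNset /= ?h].
by apply: measurable_sum => x; exact: measurable_indic.
Qed.

Lemma measurable_tnth_ge (c : R) (j : 'I_d) : measurable [set y | c <= tnth y j].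
Proof.
rewrite -[X in measurable X]setTI.
have -> : [set y | c <= tnth y j] = (fun y : pt => tnth y j) @^-1` `[c, +oo[%classic.
  by apply/seteqP; split => y /=; rewrite in_itv /= andbT.
by apply: measurable_tnth => //; exact: measurable_itv.
Qed.

Lemma measurable_tnth_le (c : R) (j : 'I_d) : measurable [set y | tnth y j <= c].
Proof.
rewrite -[X in measurable X]setTI.
have -> : [set y | tnth y j <= c] = (fun y : pt => tnth y j) @^-1` `]-oo, c]%classic.
  by apply/seteqP; split => y /=; rewrite in_itv.
by apply: measurable_tnth => //; exact: measurable_itv.
Qed.

Lemma measurable_fun_Tj D (j : 'I_d) :
  measurable_fun setT (fun y => ((Tj D j y)%:R : R)).
Proof.
have -> : (fun y => ((Tj D j y)%:R : R)) =
  (fun y => ((count (fun x => tnth x j <= tnth y j) D)%:R : R)) \min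
  (fun y => ((count (fun x => tnth y j <= tnth x j) D)%:R : R)).
  by apply/funext => y; rewrite /Tj -minEnat natr_min.
apply: measurable_minr.
  by apply: measurable_fun_count => x; exact: measurable_tnth_ge.
by apply: measurable_fun_count => x; exact: measurable_tnth_le.
Qed.

Lemma measurable_fun_bigmin (I : Type) (s : seq I) (c : R) (f : I -> pt -> R) :
  (forall i, measurable_fun setT (f i)) ->
  measurable_fun setT (fun y => \big[Num.min/c]_(i <- s) f i y).
Proof.
move=> mf; elim: s => [|i s IH].
  by under eq_fun do rewrite big_nil; exact: measurable_cst.
by under eq_fun do rewrite big_cons; exact: measurable_minr.
Qed.

Lemma measurable_fun_Ttilde D :
  measurable_fun setT (fun y => ((Ttilde D y)%:R : R)).
Proof.
have -> : (fun y => ((Ttilde D y)%:R : R)) =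
    (fun y => \big[Num.min/(size D)%:R]_(j < d) ((Tj D j y)%:R : R)).
  apply/funext => y; rewrite /Ttilde.
  by rewrite (big_morph (fun n : nat => (n%:R : R)) (op1 := Num.min)
    (id1 := (size D)%:R) _ (erefl _)) // => a b; rewrite -minEnat natr_min.
by apply: measurable_fun_bigmin => j; exact: measurable_fun_Tj.
Qed.

Lemma measurable_Ttilde_ge D (p : int) :
  measurable [set y | p <= (Ttilde D y)%:Z].
Proof.
rewrite -[X in measurable X]setTI.
have -> : [set y | p <= (Ttilde D y)%:Z] =
    (fun y => ((Ttilde D y)%:R : R)) @^-1` `[p%:~R, +oo[%classic.
  by apply/seteqP; split => y /=; rewrite in_itv /= andbT -(@ler_int R).
by apply: measurable_fun_Ttilde => //; exact: measurable_itv.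
Qed.

Lemma measurable_Ttilde_geq D (p : nat) : measurable [set y | (p <= Ttilde D y)%N].
Proof.
have -> : [set y | (p <= Ttilde D y)%N] = [set y | p%:Z <= (Ttilde D y)%:Z].
  by apply/seteqP; split => y /=; rewrite lez_nat.
exact: measurable_Ttilde_ge.
Qed.

Lemma measurable_mech_density (eps : R) (t : nat) D :
  measurable_fun setT (mech_density eps t D).
Proof.
have -> : mech_density eps t D = EFin \o (fun y =>
    \1_[set y | (t <= Ttilde D y)%N] y * expR (eps * (Ttilde D y)%:R / 2)).
  apply/funext => y; rewrite /mech_density /= indicE.
  by case: ifP => h; [rewrite mem_set ?mul1r|rewrite memNset ?mul0r //= h].
apply/measurable_EFinP; apply: measurable_funM.
  by apply: measurable_indic; exact: measurable_Ttilde_geq.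
apply: measurableT_comp; first exact: measurable_expR.
apply: measurable_funM; last exact: measurable_cst.
by apply: measurable_funM; [exact: measurable_cst|exact: measurable_fun_Ttilde].
Qed.

End DepthMeasurability.

Section DepthDistance.
Variables (R : realType) (d : nat).
Implicit Types (D z : database R d) (y : d.-tuple (measurableTypeR R)).

Lemma Ttilde_perm D D' y : perm_eq D D' -> Ttilde D y = Ttilde D' y.
Proof.
move=> pDD; rewrite /Ttilde (perm_size pDD); apply: eq_bigr => j _.
by rewrite /Tj !(permP pDD).
Qed.

Lemma Ttilde_cons x D y : (Ttilde D y <= Ttilde (x :: D) y <= Ttilde D y + 1)%N.
Proof.
apply: (big_ind2 (fun a b : nat => (a <= b <= a + 1)%N)).
- by rewrite addn1 leqnSn leqnn.
- by move=> a1 a2 b1 b2 /andP[? ?] /andP[? ?]; apply/andP; split; lia.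
- move=> j _; rewrite /Tj /=.
  by case: (tnth x j <= tnth y j); case: (tnth y j <= tnth x j) => /=;
    apply/andP; split; lia.
Qed.

Lemma Ttilde_le_size D y : (Ttilde D y <= size D)%N.
Proof.
apply: (big_ind (fun v => v <= size D)%N) => // [a b|j _]; first lia.
by apply: leq_trans (geq_minl _ _) _; exact: count_size.
Qed.

Lemma Ttilde_neighbor D D' y : neighbor D D' ->
  (Ttilde D' y <= Ttilde D y + 1)%N /\ (Ttilde D y <= Ttilde D' y + 1)%N.
Proof.
case=> x [] p; rewrite (Ttilde_perm y p).
  by have := Ttilde_cons x D y; lia.
by have := Ttilde_cons x D' y; lia.
Qed.

Lemma neighbor_sym D D' : neighbor D D' -> neighbor D' D.
Proof. by case=> x [] p; exists x; [right|left]. Qed.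

Lemma Ttilde_chain h D z y : chain h D z ->
  (Ttilde z y <= Ttilde D y + h)%N /\ (Ttilde D y <= Ttilde z y + h)%N.
Proof.
elim: h D => [|h IH] D /=; first by move=> p; rewrite (Ttilde_perm y p) !addn0.
move=> [D1 [nb ch]]; have := IH _ ch; have := Ttilde_neighbor y nb; lia.
Qed.

Lemma chain_cons k D z x : chain k D z -> chain k.+1 D (x :: z).
Proof.
elim: k D => [|k IH] D /=.
  by move=> p; exists (x :: D); split; [exists x; left|rewrite perm_cons].
by move=> [D1 [nb ch]]; exists D1; split => //; exact: IH.
Qed.

Lemma chain_size D z : chain (size D + size z) D z.
Proof.
elim: D => [|x D IH] /=; last by exists D; split => //; exists x; right.
by elim: z => [|x z IHz] //=; exact: chain_cons.
Qed.

Lemma chain_dH D z : chain (dH D z) D z.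
Proof.
rewrite /dH; case: pselect => [h|nh]; first by case: ex_minnP => m /asboolP.
by exfalso; apply: nh; exists (size D + size z); apply/asboolP; exact: chain_size.
Qed.

Lemma Ttilde_dH D z y :
  (Ttilde z y <= Ttilde D y + dH D z)%N /\ (Ttilde D y <= Ttilde z y + dH D z)%N.
Proof. exact: Ttilde_chain (chain_dH D z). Qed.

End DepthDistance.

Section LevelSetVolumes.
Variables (R : realType) (d : nat).
Implicit Types (D : database R d).

Lemma VE p D : V p D = lebesgue_tuple R d [set y | p <= (Ttilde D y)%:Z].
Proof. by rewrite /V lebesgue_dE. Qed.

Lemma V_ge0 p D : (0 <= V p D)%E.
Proof. by rewrite VE measure_ge0. Qed.

Lemma le_V_shift D1 D2 (c : nat) (p q : int) :
  (forall y, (Ttilde D1 y <= Ttilde D2 y + c)%N) -> q <= p - c%:Z ->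
  (V p D1 <= V q D2)%E.
Proof.
move=> hT hq; rewrite !VE; apply: le_measure; rewrite ?inE;
  try exact: measurable_Ttilde_ge.
by move=> y /= hp; have := hT y; lia.
Qed.

Lemma le_V_level D (p q : int) : q <= p -> (V p D <= V q D)%E.
Proof. by move=> h; apply: (@le_V_shift D D 0) => [y|]; rewrite ?addn0 ?subr0. Qed.

Variables (eps delta : R) (t : nat).

Lemma M_spec D : M eps delta t D = -1 \/
  exists k : 'I_t, goodk eps delta t D k /\ M eps delta t D = k%:Z.
Proof.
apply: (big_ind (fun v => v = -1 \/
  exists k : 'I_t, goodk eps delta t D k /\ v = k%:Z)) => [|a b ha hb|k /asboolP].
- by left.
- by rewrite /Num.max; case: ifP.
- by right; exists k.
Qed.

Lemma goodk_le_M D (k : 'I_t) : goodk eps delta t D k -> k%:Z <= M eps delta t D.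
Proof. by move=> gk; apply: le_bigmax_cond; exact/asboolP. Qed.

Lemma M_ge_N1 D : -1 <= M eps delta t D.
Proof. by case: (M_spec D) => [->|[k [_ ->]]]. Qed.

End LevelSetVolumes.

Lemma fine_le_lty (R : realDomainType) (x y : \bar R) :
  (0 <= x)%E -> (x <= y)%E -> (y < +oo)%E -> fine x <= fine y.
Proof.
move=> x0 xy yoo; apply: fine_le => //; rewrite ge0_fin_numE //.
- exact: le_lt_trans yoo.
- exact: le_trans xy.
Qed.

Lemma ler_ratio (R : realFieldType) (a' a b b' : R) :
  0 <= a' -> a' <= a -> 0 < b -> b <= b' -> a' / b' <= a / b.
Proof.
move=> a0 aa b0 bb; have b'0 : 0 < b' by exact: lt_le_trans bb.
by rewrite ler_pdivrMr // mulrAC ler_pdivlMr //; nra.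
Qed.

Section Sensitivity.
Variables (R : realType) (d : nat) (eps delta : R) (t : nat).
Hypothesis delta_ge0 : 0 <= delta.
Implicit Types (D : database R d).

Lemma goodk_neighbor D D' (k : nat) : neighbor D D' ->
  goodk eps delta t D k.+1 -> goodk eps delta t D' k.
Proof.
move=> /(fun nb y => Ttilde_neighbor y nb) hT [g [g0 /= [aoo b0 rat]]].
exists g; split => //=.
set a := V _ D in aoo rat *; set b := V _ D in b0 rat *.
set a' := V _ D'; set b' := V _ D'.
have aa : (a' <= a)%E.
  by apply: (@le_V_shift _ _ _ _ 1) => [y|/=]; [case: (hT y)|lia].
have bb : (b <= b')%E.
  by apply: (@le_V_shift _ _ _ _ 1) => [y|/=]; [case: (hT y)|lia].
have boo : (b < +oo)%E.
  by apply: le_lt_trans aoo; apply: le_V_level; lia.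
split; [exact: le_lt_trans aoo|exact: lt_le_trans bb|].
have [b'oo|] := ltP b' +oo%E; last first.
  by rewrite leye_eq => /eqP ->; rewrite /= invr0 mulr0 mul0r.
apply: le_trans rat; apply: ler_wpM2r; first exact: expR_ge0.
apply: ler_ratio; [exact/fine_ge0/V_ge0|exact/fine_le_lty/aoo/aa/V_ge0| |].
- by rewrite fine_gt0 // b0 boo.
- exact/fine_le_lty/b'oo/bb/V_ge0.
Qed.

Lemma M_neighbor_lower D D' : neighbor D D' ->
  M eps delta t D - 1 <= M eps delta t D'.
Proof.
move=> nb; have := M_ge_N1 eps delta t D'.
case: (M_spec eps delta t D) => [-> |[[[|k] kt] [/= gk ->]]] hm.
- by apply: le_trans hm; rewrite lerBlDr; lia.
- by rewrite sub0r.
have kt' : (k < t)%N by lia.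
by have := goodk_le_M (k := Ordinal kt') (goodk_neighbor nb gk) => /=; lia.
Qed.

Lemma M_sensitivity D D' : neighbor D D' ->
  `|M eps delta t D - M eps delta t D'| <= 1.
Proof.
move=> nb; have := M_neighbor_lower nb; have := M_neighbor_lower (neighbor_sym nb).
by rewrite ler_norml => ? ?; apply/andP; split; lia.
Qed.

End Sensitivity.

Section DensityIntegrals.
Variables (R : realType) (d : nat) (eps : R) (t : nat).
Hypothesis eps_ge0 : 0 <= eps.
Local Notation pt := (d.-tuple (measurableTypeR R)).
Variable mu : {measure set pt -> \bar R}.
Local Notation dens := (mech_density eps t).
Implicit Types (w : database R d) (y : pt).

Definition score_weight (n : nat) : R := expR (eps * n%:R / 2).

Lemma mech_densityE w y :
  dens w y = (if (t <= Ttilde w y)%N then score_weight (Ttilde w y) else 0)%:E.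
Proof. by []. Qed.

Lemma mech_density_ge0 w y : (0 <= dens w y)%E.
Proof. by rewrite mech_densityE lee_fin; case: ifP => // _; exact: expR_ge0. Qed.

Lemma score_weight_le (m n : nat) : (m <= n)%N -> score_weight m <= score_weight n.
Proof.
move=> mn; rewrite ler_expR ler_wpM2r ?invr_ge0 ?ler0n //.
by rewrite ler_wpM2l // ler_nat.
Qed.

Lemma score_weightS (n : nat) : score_weight n.+1 = expR (eps / 2) * score_weight n.
Proof. by rewrite /score_weight -expRD -addn1 natrD; congr expR; ring. Qed.

Lemma score_weight_shift (m n g : nat) : (m + g <= n)%N ->
  score_weight m <= expR (- (eps * g%:R) / 2) * score_weight n.
Proof.
rewrite /score_weight -expRD ler_expR -(ler_nat R) natrD => mgn.
by have := mulr_ge0 eps_ge0 (_ : 0 <= n%:R - m%:R - g%:R :> R); lra.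
Qed.

Lemma integral_cst_indic (c : R) (S W : set pt) :
  measurable S -> measurable W -> 0 <= c ->
  (\int[mu]_(y in W) (c%:E * (\1_S y)%:E) = c%:E * mu (S `&` W))%E.
Proof.
move=> mS mW c0; rewrite ge0_integralZl_EFin ?integral_indic //.
by apply/measurable_EFinP; exact: measurable_indic.
Qed.

Lemma measurable_fun_cst_indic (c : R) (S W : set pt) : measurable S ->
  measurable_fun W (fun y => c%:E * (\1_S y)%:E)%E.
Proof.
move=> mS; apply: emeasurable_funM; first exact: measurable_cst.
by apply/measurable_EFinP; exact: measurable_indic.
Qed.

(* The indicator term covers the points of depth t at w that drop below t at w'. *)
Lemma density_le_shift (n1 n2 : nat) (b : bool) : (n1 <= n2 + 1)%N ->
  ((t <= n1)%N -> b) ->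
  (if (t <= n1)%N then score_weight n1 else 0) <=
  expR (eps / 2) * (if (t <= n2)%N then score_weight n2 else 0) +
  score_weight t * b%:R.
Proof.
move=> n12 hb.
have w2 : 0 <= (if (t <= n2)%N then score_weight n2 else 0).
  by case: ifP => // _; exact: expR_ge0.
have e0 := expR_ge0 (eps / 2); have wt := expR_ge0 (eps * t%:R / 2).
case: ifPn => t1; last by apply: addr_ge0; apply: mulr_ge0 => //.
rewrite (hb t1) mulr1; case: ifPn => t2.
  rewrite -score_weightS; apply: ler_wpDr => //; apply: score_weight_le; lia.
by rewrite mulr0 add0r; apply: score_weight_le; lia.
Qed.

Lemma integral_density_le_shift w w' (A W : set pt) :
  measurable A -> measurable W ->
  (forall y, (Ttilde w y <= Ttilde w' y + 1)%N) ->
  (forall y, (t <= Ttilde w y)%N -> A y) ->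
  (\int[mu]_(y in W) dens w y <=
   (expR (eps / 2))%:E * \int[mu]_(y in W) dens w' y + (score_weight t)%:E * mu A)%E.
Proof.
move=> mA mW hT hA.
have mdW w1 := measurable_funS measurableT (@subsetT _ W) (measurable_mech_density eps t w1).
have m1 : measurable_fun W (fun y => (expR (eps / 2))%:E * dens w' y)%E.
  by apply: emeasurable_funM => //; exact: measurable_cst.
have p1 y : W y -> (0 <= (expR (eps / 2))%:E * dens w' y)%E.
  by move=> _; apply: mule_ge0; [rewrite lee_fin expR_ge0|exact: mech_density_ge0].
have p2 y : W y -> (0 <= (score_weight t)%:E * (\1_A y)%:E)%E.
  by move=> _; apply: mule_ge0; rewrite lee_fin ?expR_ge0.
apply: le_trans (_ : (\int[mu]_(y in W) ((expR (eps / 2))%:E * dens w' y +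
   (score_weight t)%:E * (\1_A y)%:E) <= _)%E).
  apply: ge0_le_integral => //; first by move=> y _; exact: mech_density_ge0.
    by apply: emeasurable_funD => //; exact: measurable_fun_cst_indic.
  move=> y _; rewrite !mech_densityE indicE -!EFinM -EFinD lee_fin.
  by apply: density_le_shift; [exact: hT|move=> /hA Ay; rewrite mem_set].
rewrite ge0_integralD //; last exact: measurable_fun_cst_indic.
rewrite ge0_integralZl_EFin ?expR_ge0 //; last by move=> y _; exact: mech_density_ge0.
rewrite integral_cst_indic ?expR_ge0 //.
apply: leeD => //; apply: lee_pmul; rewrite ?lee_fin ?expR_ge0 //.
by apply: le_measure; rewrite ?inE //; exact: measurableI.
Qed.

Lemma integral_density_le_support w (A : set pt) : measurable A ->
  (forall y, (t <= Ttilde w y)%N -> A y) ->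
  (\int[mu]_(y in setT) dens w y <= (score_weight (size w))%:E * mu A)%E.
Proof.
move=> mA hA; rewrite -[A in mu A]setIT -integral_cst_indic ?expR_ge0 //.
apply: ge0_le_integral => //.
- by move=> y _; exact: mech_density_ge0.
- exact: measurable_mech_density.
- exact: measurable_fun_cst_indic.
move=> y _; rewrite mech_densityE indicE -EFinM lee_fin.
case: ifPn => ht; last by apply: mulr_ge0; rewrite ?expR_ge0.
by rewrite (mem_set (hA _ ht)) mulr1; apply/score_weight_le/Ttilde_le_size.
Qed.

Lemma integral_density_ge_level w (q : nat) : (t <= q)%N ->
  ((score_weight q)%:E * mu [set y | (q <= Ttilde w y)%N] <=
   \int[mu]_(y in setT) dens w y)%E.
Proof.
move=> tq; rewrite -[X in (_ * mu X)%E]setIT -integral_cst_indic ?expR_ge0 //;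
  last exact: measurable_Ttilde_geq.
apply: ge0_le_integral => //.
- by move=> y _; apply: mule_ge0; rewrite lee_fin ?expR_ge0.
- by apply: measurable_fun_cst_indic; exact: measurable_Ttilde_geq.
- exact: measurable_mech_density.
move=> y _; rewrite mech_densityE indicE -EFinM lee_fin.
case: (boolP (y \in _)) => [/set_mem /= hq|_].
  by rewrite mulr1 ifT; [exact: score_weight_le|exact: leq_trans hq].
by rewrite mulr0; case: ifP => // _; exact: expR_ge0.
Qed.

Lemma integral_density_fin w (W : set pt) : measurable W ->
  (\int[mu]_(y in setT) dens w y < +oo)%E ->
  [/\ (\int[mu]_(y in W) dens w y = (fine (\int[mu]_(y in W) dens w y))%:E)%E,
      0 <= fine (\int[mu]_(y in W) dens w y) &
      fine (\int[mu]_(y in W) dens w y) <= fine (\int[mu]_(y in setT) dens w y)].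
Proof.
move=> mW hoo.
have h0 : (0 <= \int[mu]_(y in W) dens w y)%E.
  by apply: integral_ge0 => y _; exact: mech_density_ge0.
have hle : (\int[mu]_(y in W) dens w y <= \int[mu]_(y in setT) dens w y)%E.
  apply: ge0_subset_integral => //; first exact: measurable_mech_density.
  by move=> y _; exact: mech_density_ge0.
split; [|exact: fine_ge0|exact: fine_le_lty].
by rewrite fineK // ge0_fin_numE //; exact: le_lt_trans hoo.
Qed.

End DensityIntegrals.

Lemma ler_ratio_shift (R : realFieldType) (e E delta J1 J2 Z1 Z2 : R) :
  1 <= e -> 0 < Z1 -> 0 < Z2 -> 0 <= J2 -> J2 <= Z2 ->
  J1 <= e * J2 + E -> Z2 <= e * Z1 + E -> 0 <= E -> E <= delta * Z1 ->
  J1 / Z1 <= e * e * (J2 / Z2) + 4 * (e * e) * delta.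
Proof.
move=> e1 Z1_gt0 Z2_gt0 J2_ge0 J2Z2 J1J2 Z2Z1 E_ge0 Edelta.
(* With Q = J2 / Z2 in [0, 1]:
   J1 <= e Q Z2 + E <= e^2 Q Z1 + (e Q + 1) E <= e^2 Q Z1 + (e + 1) delta Z1. *)
set Q := J2 / Z2.
have J2E : J2 = Q * Z2 by rewrite /Q divfK // gt_eqF.
have Q_ge0 : 0 <= Q by rewrite /Q divr_ge0 // ltW.
have Q_le1 : Q <= 1 by rewrite /Q ler_pdivrMr // mul1r.
have delta_ge0 : 0 <= delta.
  by rewrite -(pmulr_lge0 _ Z1_gt0); exact: le_trans Edelta.
rewrite ler_pdivrMr //.
have eQ_ge0 : 0 <= e * Q by apply: mulr_ge0 => //; lra.
have s1 : e * Q * Z2 <= e * Q * (e * Z1 + E).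
  by have := mulr_ge0 eQ_ge0 (_ : 0 <= e * Z1 + E - Z2); nra.
have s2 : e * Q * E <= e * delta * Z1.
  have QE : Q * E <= E by have := mulr_ge0 (_ : 0 <= 1 - Q) E_ge0; nra.
  by have := mulr_ge0 (_ : 0 <= e) (_ : 0 <= delta * Z1 - Q * E); nra.
have dZ := mulr_ge0 delta_ge0 (ltW Z1_gt0).
have := mulr_ge0 dZ (_ : 0 <= 2 * e * e - e).
have := mulr_ge0 dZ (_ : 0 <= 2 * e * e - 1).
rewrite J2E mulrA in J1J2; nra.
Qed.

Section MechanismIndistinguishability.
Variables (R : realType) (d : nat) (eps delta : R) (t : nat).
Hypothesis eps_ge0 : 0 <= eps.
Local Notation pt := (d.-tuple (measurableTypeR R)).
Local Notation mu := (lebesgue_tuple R d : {measure set pt -> \bar R}).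
Local Notation Z w := (\int[mu]_(y in setT) mech_density eps t w y)%E.
Implicit Types (w : database R d).

Lemma mechE w W :
  mech eps t w W = fine (\int[mu]_(y in W) mech_density eps t w y)%E / fine (Z w).
Proof. by rewrite /mech lebesgue_dE. Qed.

Lemma normaliser_lty w (A : set pt) : measurable A -> (mu A < +oo)%E ->
  (forall y, (t <= Ttilde w y)%N -> A y) -> (Z w < +oo)%E.
Proof.
move=> mA Aoo hA; apply: le_lt_trans (integral_density_le_support eps_ge0 mu mA hA) _.
by apply: lte_mul_pinfty; rewrite ?lee_fin ?expR_ge0.
Qed.

Section NeighbouringDatabases.
Variables (w1 w2 : database R d) (A : set pt).
Hypotheses (mA : measurable A) (Aoo : (mu A < +oo)%E).
Hypotheses (T12 : forall y, (Ttilde w1 y <= Ttilde w2 y + 1)%N)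
           (T21 : forall y, (Ttilde w2 y <= Ttilde w1 y + 1)%N).
Hypotheses (A1 : forall y, (t <= Ttilde w1 y)%N -> A y)
           (A2 : forall y, (t <= Ttilde w2 y)%N -> A y).
Hypotheses (Z1_gt0 : 0 < fine (Z w1)) (Z2_gt0 : 0 < fine (Z w2)).

Lemma mech_le_shift W : measurable W ->
  score_weight eps t * fine (mu A) <= delta * fine (Z w1) ->
  mech eps t w1 W <= expR eps * mech eps t w2 W + 4 * expR eps * delta.
Proof.
move=> mW hE.
have Z1oo := normaliser_lty mA Aoo A1; have Z2oo := normaliser_lty mA Aoo A2.
have [J1E _ _] := integral_density_fin mW Z1oo.
have [J2E J2_ge0 J2Z2] := integral_density_fin mW Z2oo.
have [Z1E _ _] := integral_density_fin measurableT Z1oo.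
have [Z2E _ _] := integral_density_fin measurableT Z2oo.
have AE : mu A = (fine (mu A))%:E by rewrite fineK // ge0_fin_numE // measure_ge0.
have J12 := integral_density_le_shift eps_ge0 mu mA mW T12 A1.
have Z21 := integral_density_le_shift eps_ge0 mu mA measurableT T21 A2.
rewrite J1E J2E AE -!EFinM -EFinD lee_fin in J12.
rewrite Z1E Z2E AE -!EFinM -EFinD lee_fin in Z21.
have -> : expR eps = expR (eps / 2) * expR (eps / 2).
  by rewrite -expRD; congr expR; field.
have e_ge1 : 1 <= expR (eps / 2) by rewrite -expR0 ler_expR divr_ge0.
have E_ge0 : 0 <= score_weight eps t * fine (mu A).
  by apply: mulr_ge0; [exact: expR_ge0|exact/fine_ge0/measure_ge0].
rewrite !mechE.
exact: (ler_ratio_shift e_ge1 Z1_gt0 Z2_gt0 J2_ge0 J2Z2 J12 Z21 E_ge0 hE).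
Qed.

End NeighbouringDatabases.

Lemma indist_mech w1 w2 (A : set pt) : measurable A -> (mu A < +oo)%E ->
  (forall y, (Ttilde w2 y <= Ttilde w1 y + 1)%N /\ (Ttilde w1 y <= Ttilde w2 y + 1)%N) ->
  (forall y, (t <= Ttilde w1 y)%N -> A y) -> (forall y, (t <= Ttilde w2 y)%N -> A y) ->
  0 < fine (Z w1) -> 0 < fine (Z w2) ->
  score_weight eps t * fine (mu A) <= delta * fine (Z w1) ->
  score_weight eps t * fine (mu A) <= delta * fine (Z w2) ->
  indist eps (4 * expR eps * delta) (mech eps t w1) (mech eps t w2).
Proof.
move=> mA Aoo T A1 A2 Z1 Z2 h1 h2 W mW.
have T12 y := (T y).2; have T21 y := (T y).1.
split; [exact: (mech_le_shift mA Aoo T12 T21 A1 A2 Z1 Z2 mW h1)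
       |exact: (mech_le_shift mA Aoo T21 T12 A2 A1 Z2 Z1 mW h2)].
Qed.

End MechanismIndistinguishability.

Section FarFromUnsafe.
Variables (R : realType) (d : nat) (eps delta : R) (t : nat).
Hypotheses (eps_gt0 : 0 < eps) (delta_gt0 : 0 < delta).
Local Notation pt := (d.-tuple (measurableTypeR R)).
Local Notation mu := (lebesgue_tuple R d : {measure set pt -> \bar R}).
Local Notation Z w := (\int[mu]_(y in setT) mech_density eps t w y)%E.
Implicit Types (D w z : database R d).

Lemma V_le_normaliser D w (k g h : nat) : (h <= k)%N ->
  (forall y, (Ttilde D y <= Ttilde w y + h.+1)%N) ->
  ((score_weight eps (t + (k - h) + g))%:E * V (t%:Z + k%:Z + g%:Z + 1) D <= Z w)%E.
Proof.
move=> hk hT; have tq : (t <= t + (k - h) + g)%N by rewrite -addnA leq_addr.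
apply: le_trans (@integral_density_ge_level _ _ _ _ (ltW eps_gt0) mu w _ tq).
apply: lee_wpmul2l; first by rewrite lee_fin expR_ge0.
rewrite VE; apply: le_measure; rewrite ?inE;
  [exact: measurable_Ttilde_ge|exact: measurable_Ttilde_geq|].
by move=> y /= hy; have := hT y; lia.
Qed.

Lemma support_mass_le_delta_normaliser D w (A : set pt) (k g h : nat) :
  (h <= k)%N -> (forall y, (Ttilde D y <= Ttilde w y + h.+1)%N) ->
  (mu A <= V (t%:Z - k%:Z - 1) D)%E -> (V (t%:Z - k%:Z - 1) D < +oo)%E ->
  (0 < V (t%:Z + k%:Z + g%:Z + 1) D)%E ->
  fine (V (t%:Z - k%:Z - 1) D) / fine (V (t%:Z + k%:Z + g%:Z + 1) D) *
    expR (- (eps * g%:R) / 2) <= delta ->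
  (Z w < +oo)%E ->
  0 < fine (Z w) /\ score_weight eps t * fine (mu A) <= delta * fine (Z w).
Proof.
move=> hk hT Aa aoo b_gt0 ratio Zoo.
have bZ := V_le_normaliser g hk hT.
set a := V _ D in Aa aoo ratio; set b := V _ D in b_gt0 ratio bZ.
set q := (t + (k - h) + g)%N in bZ.
have boo : (b < +oo)%E by apply: le_lt_trans aoo; apply: le_V_level; lia.
have fb_gt0 : 0 < fine b by rewrite fine_gt0 // b_gt0 boo.
have {}bZ : score_weight eps q * fine b <= fine (Z w).
  rewrite -[score_weight _ _]/(fine (score_weight eps q)%:E) -fineM //;
    last by rewrite ge0_fin_numE // ltW.
  by apply: fine_le_lty Zoo => //; rewrite mule_ge0 ?lee_fin ?expR_ge0 // ltW.
have Z_gt0 : 0 < fine (Z w).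
  by apply: lt_le_trans bZ; rewrite mulr_gt0 ?expR_gt0.
split => //.
have fA : fine (mu A) <= fine a by exact: fine_le_lty (measure_ge0 _ _) Aa aoo.
have fA_ge0 : 0 <= fine (mu A) by exact/fine_ge0/measure_ge0.
set X := expR (- (eps * g%:R) / 2) in ratio.
have fa_X : fine a * X <= delta * fine b.
  by move: ratio; rewrite mulrAC ler_pdivrMr.
have weight_t : score_weight eps t <= X * score_weight eps q.
  by apply: (score_weight_shift (ltW eps_gt0)); rewrite /q -addnA leq_add2l leq_addl.
apply: le_trans (ler_pM (expR_ge0 _) fA_ge0 weight_t fA) _.
apply: le_trans (ler_wpM2l (ltW delta_gt0) bZ).
have -> : X * score_weight eps q * fine a = score_weight eps q * (fine a * X).
  by ring.
by rewrite [delta * _]mulrCA; apply: ler_wpM2l fa_X; exact: expR_ge0.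
Qed.

Lemma safe_of_goodk_ge_dH D z (k : nat) :
  goodk eps delta t D k -> (dH D z <= k)%N -> safe eps (4 * expR eps * delta) t z.
Proof.
move=> [g [_ /= [aoo b_gt0 ratio]]] hk z' nb.
set A := [set y | (t - 1 <= Ttilde z y)%N].
have mA : measurable A by exact: measurable_Ttilde_geq.
have Tzz' y := Ttilde_neighbor y nb.
have Aa : (mu A <= V (t%:Z - k%:Z - 1) D)%E.
  rewrite VE; apply: le_measure; rewrite ?inE; [exact: mA|exact: measurable_Ttilde_ge|].
  by move=> y; rewrite /A /=; have := Ttilde_dH D z y; lia.
have Aoo := le_lt_trans Aa aoo.
have Az y : (t <= Ttilde z y)%N -> A y by rewrite /A /=; lia.
have Az' y : (t <= Ttilde z' y)%N -> A y by have := Tzz' y; rewrite /A /=; lia.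
have Dz y : (Ttilde D y <= Ttilde z y + (dH D z).+1)%N.
  by have := Ttilde_dH D z y; lia.
have Dz' y : (Ttilde D y <= Ttilde z' y + (dH D z).+1)%N.
  by have := Ttilde_dH D z y; have := Tzz' y; lia.
have [Z_gt0 mass_z] := support_mass_le_delta_normaliser hk Dz Aa aoo b_gt0 ratio
  (normaliser_lty (ltW eps_gt0) mA Aoo Az).
have [Z'_gt0 mass_z'] := support_mass_le_delta_normaliser hk Dz' Aa aoo b_gt0 ratio
  (normaliser_lty (ltW eps_gt0) mA Aoo Az').
by apply: (indist_mech (ltW eps_gt0) mA Aoo).
Qed.

Lemma M_lt_dH D z : z \in Unsafe eps (4 * expR eps * delta) t ->
  M eps delta t D < (dH D z)%:Z.
Proof.
rewrite inE => unsafe_z.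
case: (M_spec eps delta t D) => [->|[k [gk ->]]]; first by lia.
rewrite ltz_nat ltnNge; apply/negP => hk.
exact: unsafe_z (safe_of_goodk_ge_dH gk hk).
Qed.

End FarFromUnsafe.

Unset Implicit Arguments.

Theorem mainTheorem2 (R : realType) (d : nat) (eps delta : R) (t : nat)
  (hd : (0 < d)%N) (heps : 0 < eps) (hdelta : 0 < delta) (ht : (0 < t)%N) :
  (forall D D' : database R d, neighbor D D' ->
     `|M eps delta t D - M eps delta t D'| <= 1) /\
  (forall D z : database R d,
     (0 < lebesgue_d d [set y | (t <= Ttilde z y)%N])%E ->
     (forall z', neighbor z z' ->
        (0 < lebesgue_d d [set y | (t <= Ttilde z' y)%N])%E) ->
     z \in Unsafe eps (4 * expR eps * delta) t ->
     M eps delta t D < (dH D z)%:Z).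
Proof.
split=> [D D' nb | D z _ _]; first exact: (M_sensitivity eps t (ltW hdelta) nb).
exact: (M_lt_dH heps hdelta).
Qed.
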